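(* Let $n$ be even and let $v_0,\dots,v_{n+1}\in\mathbb{R}^n$ be hereditarily spanning. Then $dP(v_0,\dots,v_{n+1})=0$.
   Context: For $v_1,\dots,v_n\in\mathbb{R}^n$, $\mathrm{Or}(v_1,\dots,v_n)\in\{-1,0,1\}$ is the sign of $\det(v_1,\dots,v_n)$ (zero if not a basis). Define $P:(\mathbb{R}^n)^{n+1}\to\{-1,0,1\}$ by $P(v_0,\dots,v_n)=\prod_{i=0}^n\mathrm{Or}(v_0,\dots,\widehat{v_i},\dots,v_n)$. A $k$-tuple ($k\ge n$) of vectors in $\mathbb{R}^n$ is hereditarily spanning if every subcollection of $n$ of its elements spans $\mathbb{R}^n$. The coboundary is $dP(v_0,\dots,v_{n+1})=\sum_{i=0}^{n+1}(-1)^iP(v_0,\dots,\widehat{v_i},\dots,v_{n+1})$. *)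

From HB Require Import structures.
From mathcomp Require Import all_boot all_order all_algebra.
Set Implicit Arguments. Unset Strict Implicit. Unset Printing Implicit Defensive.
Import Order.TTheory GRing.Theory Num.Theory.
Local Open Scope ring_scope.

Definition Or (R : realFieldType) (n : nat) (v : 'I_n -> 'rV[R]_n) : int :=
  sgz (\det (\matrix_(i < n) v i)).

Definition P (R : realFieldType) (n : nat) (v : 'I_n.+1 -> 'rV[R]_n) : int :=
  \prod_(i < n.+1) Or (fun j : 'I_n => v (lift i j)).

Definition dP (R : realFieldType) (n : nat) (v : 'I_n.+2 -> 'rV[R]_n) : int :=
  \sum_(i < n.+2) (-1) ^+ i * P (fun j : 'I_n.+1 => v (lift i j)).

Definition hereditarily_spanning (R : realFieldType) (n k : nat)
    (v : 'I_k -> 'rV[R]_n) : Prop :=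
  forall f : 'I_n -> 'I_k, injective f -> row_full (\matrix_(i < n) v (f i)).

(* The n+2 vectors satisfy a two-dimensional space of linear relations.  The
   relation among the vectors other than v_p has the signed maximal minors as
   coefficients; collecting them gives an antisymmetric matrix G with G *m V = 0,
   and the resulting Plucker relation G_01 G_pq = x_p y_q - y_p x_q (x = G_0,
   y = G_1) turns every minor occurring in dP into the 2x2 determinant of two
   of n+2 pairwise independent points of the plane, up to signs that factor out
   of the sum.  Reflecting points through the origin only changes the sum by a
   global sign; once all points lie in the upper half-plane, the sign of the
   determinant orders them by angle, the i-th term becomes (-1)^(rank of i),
   and an even number of alternating signs sums to zero. *)

From HB Require Import structures.
From mathcomp Require Import all_boot all_order all_algebra ring.
Set Implicit Arguments. Unset Strict Implicit. Unset Printing Implicit Defensive.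
Import Order.TTheory GRing.Theory Num.Theory.
Local Open Scope ring_scope.

Lemma sum_sign_even m : ~~ odd m -> \sum_(k < m) ((-1) ^+ k : int) = 0.
Proof.
move=> m_even; rewrite -(odd_double_half m) (negbTE m_even) add0n.
elim: m./2 => [|t IHt]; first by rewrite big_ord0.
by rewrite doubleS !big_ord_recr /= IHt add0r exprS mulN1r subrr.
Qed.

Lemma sum_sign_rank m (prec : rel 'I_m) :
  ~~ odd m -> irreflexive prec -> transitive prec ->
  (forall p q, p != q -> prec p q || prec q p) ->
  \sum_i ((-1) ^+ #|[pred q | prec q i]| : int) = 0.
Proof.
move=> m_even prec_irr prec_trans prec_total.
pose rank i := #|[pred q | prec q i]|.
have rank_lt p q : prec p q -> (rank p < rank q)%N.
  move=> pq; apply: proper_card; apply/properP; split.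
    by apply/subsetP => t; rewrite !inE => /prec_trans; apply.
  by exists p; rewrite !inE ?prec_irr.
have rank_ord i : (rank i < m)%N.
  rewrite -[m]card_ord; apply: proper_card; apply/properP.
  by split; [apply/subsetP | exists i; rewrite !inE ?prec_irr].
have rank_inj : injective (fun i => Ordinal (rank_ord i)).
  move=> p q /(congr1 val) /= Epq; apply/eqP; apply: contraT => /prec_total.
  by case/orP=> /rank_lt; rewrite Epq ltnn.
by rewrite -[RHS](sum_sign_even m_even) [RHS](reindex_inj rank_inj).
Qed.

Lemma prod_neq_lift (T : comNzRingType) n (j : 'I_n.+1) (F : 'I_n.+1 -> T) :
  \prod_(q < n.+1 | q != j) F q = \prod_(k < n) F (lift j k).
Proof.
rewrite (reindex_omap (lift j) (unlift j)) /=.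
  by under eq_bigl do rewrite liftK eq_sym neq_lift eqxx.
by move=> i; case: unliftP => [k ->|->]; rewrite ?eqxx.
Qed.

Section Cross.
Variable R : comNzRingType.

Definition cross m (x y : 'I_m -> R) p q := x p * y q - y p * x q.

Lemma cross_antisym m (x y : 'I_m -> R) p q : cross x y q p = - cross x y p q.
Proof. by rewrite /cross opprB [x q * _]mulrC [y q * _]mulrC. Qed.

Lemma cross_xx m (x y : 'I_m -> R) p : cross x y p p = 0.
Proof. by rewrite /cross mulrC subrr. Qed.

End Cross.

Section PlanarPoints.
Variable R : realFieldType.

Definition upper m (x y : 'I_m -> R) p := (0 < y p) || ((y p == 0) && (0 < x p)).

Lemma upper_cross_trans m (x y : 'I_m -> R) a b c :
  upper x y a -> upper x y b -> upper x y c ->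
  0 < cross x y a b -> 0 < cross x y b c -> cross x y a c != 0 ->
  0 < cross x y a c.
Proof.
have y_ge0 p : upper x y p -> 0 <= y p by case/orP=> [/ltW|/andP[/eqP-> _]].
move=> /y_ge0 ya_ge0 ub /y_ge0 yc_ge0 ab_gt0 bc_gt0 ac_neq0.
have three_term : cross x y a b * y c + cross x y b c * y a = cross x y a c * y b.
  by rewrite /cross; ring.
case/orP: ub => [yb_gt0|/andP[/eqP yb0 xb_gt0]].
  rewrite lt_def ac_neq0 -(pmulr_lge0 _ yb_gt0) -three_term.
  by rewrite addr_ge0 // mulr_ge0 // ltW.
move: ab_gt0; rewrite /cross yb0 mulr0 sub0r oppr_gt0 => ab_lt0.
by have := lt_le_trans ab_lt0 (mulr_ge0 ya_ge0 (ltW xb_gt0)); rewrite ltxx.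
Qed.

Lemma sgz_cross_neq0 m (x y : 'I_m -> R) p q : cross x y p q != 0 ->
  sgz (cross x y p q) = (-1) ^+ (0 < cross x y q p)%R.
Proof.
by move=> pq_neq0; rewrite sgz_def pq_neq0 [cross x y q p]cross_antisym oppr_gt0.
Qed.

Lemma sum_prod_sgz_cross_upper m (x y : 'I_m -> R) :
  ~~ odd m -> (forall p, upper x y p) ->
  (forall p q, p != q -> cross x y p q != 0) ->
  \sum_i \prod_(q | q != i) sgz (cross x y i q) = 0.
Proof.
move=> m_even x_upper cross_neq0; pose prec p q := 0 < cross x y p q.
have prec_irr : irreflexive prec by move=> p; rewrite /prec cross_xx ltxx.
have prec_total p q : p != q -> prec p q || prec q p.
  move/cross_neq0; rewrite /prec [cross x y q p]cross_antisym oppr_gt0.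
  by rewrite neq_lt orbC.
have prec_trans : transitive prec.
  move=> q p r pq qr; case: (eqVneq p r) => [pr|/cross_neq0].
    move: pq; rewrite pr /prec cross_antisym oppr_gt0 => /(lt_trans qr).
    by rewrite ltxx.
  exact: upper_cross_trans (x_upper p) (x_upper q) (x_upper r) pq qr.
rewrite -[RHS](sum_sign_rank m_even prec_irr prec_trans prec_total).
apply: eq_bigr => i _.
rewrite (eq_bigr (fun q => if prec q i then -1 else 1)); last first.
  move=> q; rewrite eq_sym => /cross_neq0 /sgz_cross_neq0 ->.
  by rewrite /prec; case: (_ < _).
rewrite -(big_mkcondr _ _ _ (prec^~ i)) -prodr_const; apply: eq_bigl => q.
rewrite !inE.
by case: eqVneq => // ->; rewrite prec_irr.
Qed.

Lemma sum_prod_sgz_cross n (x y : 'I_n.+2 -> R) :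
  ~~ odd n -> (forall p q, p != q -> cross x y p q != 0) ->
  \sum_i \prod_(q | q != i) sgz (cross x y i q) = 0.
Proof.
move=> n_even cross_neq0.
pose flip p := ~~ upper x y p; pose s p : R := (-1) ^+ flip p.
pose e p : int := (-1) ^+ flip p; pose S := \prod_q e q.
pose x' p := s p * x p; pose y' p := s p * y p.
have sgz_s p : sgz (s p) = e p by rewrite sgzX sgzN1.
have e_sq p : e p * e p = 1 by rewrite -expr2 sqrr_sign.
have cross_flip p q : cross x' y' p q = s p * s q * cross x y p q.
  by rewrite /cross mulrACA [s p * y p * _]mulrACA -mulrBr.
have flip_upper p : upper x' y' p.
  rewrite {1}/upper /x' /y' /s /flip /=; case: (boolP (upper x y p)) => /=.
    by rewrite !mul1r.
  rewrite /upper !mulN1r oppr_gt0 oppr_eq0 oppr_gt0 negb_or negb_and -!leNgt.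
  case/andP=> y_ge0; case: (ltgtP (y p) 0) y_ge0 => // y0 _ /= x_le0.
  (* The point is not the origin: its cross with any other point is nonzero. *)
  rewrite lt_def x_le0 andbT.
  apply: contraTneq (cross_neq0 p (lift p ord0) (neq_lift _ _)).
  by move=> /esym x0; rewrite /cross x0 y0 !mul0r subrr eqxx.
have cross'_neq0 p q : p != q -> cross x' y' p q != 0.
  by move=> /cross_neq0 pq_neq0; rewrite cross_flip !mulf_eq0 !signr_eq0.
have prod_flip i : \prod_(q | q != i) sgz (cross x' y' i q) =
    S * \prod_(q | q != i) sgz (cross x y i q).
  under eq_bigr do rewrite cross_flip !sgzM !sgz_s.
  rewrite !big_split /= prod_neq_lift prodr_const card_ord.
  have -> : e i ^+ n.+1 = e i.
    by rewrite -exprM -signr_odd oddM /= n_even andbT oddb.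
  by rewrite /S [in RHS](bigD1 i) //= mulrA.
have S_sq : S * S = 1 by rewrite /S -big_split; apply: big1 => q _; apply: e_sq.
have n2_even : ~~ odd n.+2 by rewrite /= negbK.
have := sum_prod_sgz_cross_upper n2_even flip_upper cross'_neq0.
under eq_bigr do rewrite prod_flip.
by rewrite -mulr_sumr => /(congr1 ( *%R S)); rewrite mulrA S_sq mul1r mulr0.
Qed.

Lemma sum_prod_sgz_cross_scaled n (M : 'I_n.+2 -> 'I_n.+2 -> R) (x y : 'I_n.+2 -> R) c :
  ~~ odd n -> c != 0 -> (forall p q, c * M p q = cross x y p q) ->
  (forall p q, p != q -> M p q != 0) ->
  \sum_i \prod_(q | q != i) sgz (M i q) = 0.
Proof.
move=> n_even c_neq0 cM M_neq0.
have sgz_M p q : sgz (M p q) = sgz c * sgz (cross x y p q).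
  by rewrite -cM sgzM mulrA -expr2 sgz_odd // expr0 mul1r.
have cross_neq0 p q : p != q -> cross x y p q != 0.
  by move=> /M_neq0 pq_neq0; rewrite -cM mulf_neq0.
under eq_bigr => i _ do rewrite (eq_bigr _ (fun q _ => sgz_M i q)) big_split /=.
under eq_bigr => i _ do rewrite prod_neq_lift prodr_const card_ord.
by rewrite -mulr_sumr sum_prod_sgz_cross // mulr0.
Qed.

End PlanarPoints.

Lemma unbump_bump_self p j : unbump (bump p j) p = unbump j p.
Proof.
rewrite /unbump /bump; case: (leqP p j) => [le_pj|lt_jp]; last by rewrite add0n lt_jp.
by rewrite ltnNge add1n (leqW le_pj).
Qed.

Lemma odd_bump_unbump p j : odd (bump p j + unbump j p) = ~~ odd (p + j).
Proof.
rewrite /bump /unbump; case: leqP => [le_pj|lt_jp].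
  by rewrite subn0 add1n addSn addnC.
by case: p lt_jp => // p _; rewrite add0n subn1 addSn negbK addnC.
Qed.

Lemma mul_signed_minors_mx (R : comNzRingType) n (W : 'M[R]_(n.+1, n)) :
  \row_k ((-1) ^+ k * \det (row' k W)) *m W = 0.
Proof.
(* Entry c is the Laplace expansion along the first column of W with its column
   c prepended, a matrix with two equal columns. *)
apply/rowP => c; rewrite !mxE.
pose A : 'M[R]_n.+1 := \matrix_(i, j)
  if unlift ord0 j is Some j' then W i j' else W i c.
have detA : \det A = 0.
  rewrite -det_tr; apply: (@determinant_alternate _ _ _ ord0 (lift ord0 c)).
    exact: neq_lift.
  by move=> i; rewrite !mxE liftK unlift_none.
have colA : col' ord0 A = W by apply/matrixP => i j; rewrite !mxE liftK.
rewrite -[RHS]detA (expand_det_col A ord0); apply: eq_bigr => i _.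
by rewrite !mxE unlift_none /cofactor colA addn0 mulrC.
Qed.

Section GaleMatrix.
Variables (R : comNzRingType) (n : nat) (V : 'M[R]_(n.+2, n)).

(* Row p holds the coefficients of the Cramer relation among the rows of V
   other than row p. *)
Definition gale (p q : 'I_n.+2) : R :=
  if unlift p q is Some j then (-1) ^+ (p + j) * \det (row' j (row' p V)) else 0.

Definition gale_mx : 'M[R]_n.+2 := \matrix_(p, q) gale p q.

Lemma gale_lift p j :
  gale p (lift p j) = (-1) ^+ (p + j) * \det (row' j (row' p V)).
Proof. by rewrite /gale liftK. Qed.

Lemma gale_diag p : gale p p = 0.
Proof. by rewrite /gale unlift_none. Qed.

Lemma galeN p q : gale q p = - gale p q.
Proof.
have [->|/unlift_some[j -> _]] := eqVneq p q; first by rewrite gale_diag oppr0.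
have lift_neq : lift p j != p by rewrite eq_sym neq_lift.
have [j' Ep _] := unlift_some lift_neq.
(* Deleting rows p and q in either order leaves the same matrix, while the two
   sign exponents differ by one. *)
have j'E : j' = unbump (bump p j) p :> nat by rewrite {2}Ep /= bumpK.
rewrite [X in gale _ X]Ep !gale_lift -mulNr; congr (_ * _).
  by rewrite /= j'E unbump_bump_self -signr_odd odd_bump_unbump signrN signr_odd.
congr (\det _); apply/matrixP => a b; rewrite !mxE; congr (V _ b); apply: val_inj.
by rewrite /= j'E unbump_bump_self -bumpC.
Qed.

Lemma gale_mx_mulmx : gale_mx *m V = 0.
Proof.
apply/row_matrixP => p; rewrite row_mul row0 mulmx_sum_row (bigD1_ord p) //=.
rewrite !mxE gale_diag scale0r add0r.
rewrite -[RHS](scaler0 _ ((-1) ^+ p)) -[in RHS](mul_signed_minors_mx (row' p V)).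
rewrite mulmx_sum_row scaler_sumr; apply: eq_bigr => j _.
rewrite !mxE gale_lift exprD -mulrA scalerA; congr (_ *: _).
by apply/rowP => b; rewrite !mxE.
Qed.

End GaleMatrix.

Section GalePlucker.
Variables (F : fieldType) (n : nat) (V : 'M[F]_(n.+2, n)).
Hypothesis V_tail_free : row_free (row' ord0 (row' ord0 V)).
Let o0 : 'I_n.+2 := ord0.
Let o1 : 'I_n.+2 := lift ord0 ord0.

Lemma left_kernel_eq0 (u : 'rV_n.+2) :
  u *m V = 0 -> u 0 o0 = 0 -> u 0 o1 = 0 -> u = 0.
Proof.
move=> uV0 u0 u1; pose w := \row_k u 0 (lift ord0 (lift ord0 k)).
have w0 : w = 0.
  apply: (row_free_inj V_tail_free); rewrite mul0mx -[RHS]uV0 !mulmx_sum_row.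
  rewrite big_ord_recl u0 scale0r add0r big_ord_recl u1 scale0r add0r.
  by apply: eq_bigr => k _; rewrite !mxE; congr (_ *: _); apply/rowP => b; rewrite !mxE.
apply/rowP => q; rewrite mxE; case: (unliftP ord0 q) => [q' ->|->] //.
case: (unliftP ord0 q') => [k ->|->] //.
by have := congr1 (fun r : 'rV_n => r 0 k) w0; rewrite !mxE.
Qed.

Lemma gale_plucker p q :
  gale V o0 o1 * gale V p q = cross (gale V o0) (gale V o1) p q.
Proof.
pose G := gale V; pose M := gale_mx V.
pose u := G o0 o1 *: row p M - G o0 p *: row o1 M + G o1 p *: row o0 M.
have uV0 : u *m V = 0.
  rewrite !mulmxDl mulNmx -!scalemxAl -!row_mul gale_mx_mulmx !row0 !scaler0.
  by rewrite subrr addr0.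
have u0 : u 0 o0 = 0.
  rewrite !mxE gale_diag mulr0 addr0 (galeN V o0 p) (galeN V o0 o1).
  by rewrite !mulrN opprK mulrC addNr.
have u1 : u 0 o1 = 0.
  by rewrite !mxE gale_diag mulr0 subr0 (galeN V o1 p) mulrN mulrC addNr.
have /rowP/(_ q) := left_kernel_eq0 uV0 u0 u1.
by rewrite !mxE => /eqP; rewrite addr_eq0 subr_eq => /eqP ->; rewrite addrC.
Qed.

End GalePlucker.

Section HereditarilySpanning.
Variables (R : realFieldType) (n : nat) (v : 'I_n.+2 -> 'rV[R]_n).
Let V := \matrix_p v p.

Lemma matrix_lift2 i j : \matrix_k v (lift i (lift j k)) = row' j (row' i V).
Proof. by apply/matrixP => a b; rewrite !mxE. Qed.

Lemma dP_gale : ~~ odd n ->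
  dP v = (\prod_(j < n.+1) (-1) ^+ j) * \sum_i \prod_(q | q != i) sgz (gale V i q).
Proof.
move=> n_even; rewrite /dP mulr_sumr; apply: eq_bigr => i _.
rewrite /P /Or prod_neq_lift.
under eq_bigr => j _ do rewrite matrix_lift2 -[X in sgz X](signrMK (i + j)) -gale_lift.
under eq_bigr do rewrite sgzM sgzX sgzN1 exprD.
rewrite big_split big_split /= prodr_const card_ord !mulrA -exprS -exprM.
by rewrite -signr_odd oddM /= negbK (negbTE n_even) andbF mul1r.
Qed.

Hypothesis v_hspan : hereditarily_spanning v.

Lemma hspan_minor_neq0 i j : \det (row' j (row' i V)) != 0.
Proof.
have lift2_inj : injective (fun k => lift i (lift j k)).
  by move=> a b /lift_inj/lift_inj.
by have := v_hspan lift2_inj; rewrite matrix_lift2 row_full_unit unitmxE unitfE.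
Qed.

Lemma hspan_gale_neq0 p q : p != q -> gale V p q != 0.
Proof.
by case/unlift_some=> j -> _; rewrite gale_lift mulf_eq0 signr_eq0 hspan_minor_neq0.
Qed.

Lemma hspan_tail_free : row_free (row' ord0 (row' ord0 V)).
Proof. by rewrite row_free_unit unitmxE unitfE hspan_minor_neq0. Qed.

End HereditarilySpanning.

Theorem proposition3p5 (R : realFieldType) (n : nat) (v : 'I_n.+2 -> 'rV[R]_n) :
  ~~ odd n -> hereditarily_spanning v -> dP v = 0.
Proof.
move=> n_even v_hspan; rewrite dP_gale //.
have plucker := gale_plucker (hspan_tail_free v_hspan).
have G01_neq0 : gale (\matrix_p v p) ord0 (lift ord0 ord0) != 0.
  exact: hspan_gale_neq0 (neq_lift _ _).
rewrite (sum_prod_sgz_cross_scaled n_even G01_neq0 plucker) ?mulr0 //.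
exact: hspan_gale_neq0.
Qed.
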